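(* Let $N, n, p, \ell, K \in \mathbb{N}$ with $n \le N$. For $i = 1, \dots, \ell$ let $\boldsymbol A_i \in \mathbb{R}^{N \times N_i}$ with $N_i = \binom{N+i-1}{i}$, and let $\boldsymbol B \in \mathbb{R}^{N \times p}$. Consider the discrete-time system $$\boldsymbol f(\boldsymbol x, \boldsymbol u) = \sum_{i=1}^{\ell} \boldsymbol A_i \boldsymbol x^i + \boldsymbol B \boldsymbol u, \qquad \boldsymbol x \in \mathbb{R}^N,\ \boldsymbol u \in \mathbb{R}^p.$$ Let $\boldsymbol V_n \in \mathbb{R}^{N \times n}$ have orthonormal columns spanning $\mathcal{V}_n \subset \mathbb{R}^N$. Let $n_i = \binom{n+i-1}{i}$ and define the intrusive reduced operators $\tilde{\boldsymbol B} = \boldsymbol V_n^T \boldsymbol B$ and $\tilde{\boldsymbol A}_i \in \mathbb{R}^{n \times n_i}$ as the unique matrix with $\tilde{\boldsymbol A}_i \boldsymbol y^i = \boldsymbol V_n^T \boldsymbol A_i (\boldsymbol V_n \boldsymbol y)^i$ for all $\boldsymbol y \in \mathbb{R}^n$, $i = 1, \dots, \ell$. Let $\boldsymbol x_0 \in \mathcal{V}_n$ and $\boldsymbol u_0, \dots, \boldsymbol u_{K-1} \in \mathbb{R}^p$, and generate re-projected states $\bar{\boldsymbol x}_0 = \boldsymbol V_n^T \boldsymbol x_0$, $\bar{\boldsymbol x}_{k+1} = \boldsymbol V_n^T \boldsymbol f(\boldsymbol V_n \bar{\boldsymbol x}_k, \boldsymbol u_k)$ for $k = 0, \dots, K-1$.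 Set $\bar{\boldsymbol X} = [\bar{\boldsymbol x}_0, \dots, \bar{\boldsymbol x}_{K-1}]$, $\bar{\boldsymbol Y} = [\bar{\boldsymbol x}_1, \dots, \bar{\boldsymbol x}_K]$, $\bar{\boldsymbol X}^i = [\bar{\boldsymbol x}_0^i, \dots, \bar{\boldsymbol x}_{K-1}^i] \in \mathbb{R}^{n_i \times K}$, and $\boldsymbol U = [\boldsymbol u_0, \dots, \boldsymbol u_{K-1}] \in \mathbb{R}^{p \times K}$. Suppose $$K \ge p + \sum_{i=1}^{\ell} n_i,$$ and consider the data matrix $$\bar{\boldsymbol D} = \begin{bmatrix} \bar{\boldsymbol X} \\ \bar{\boldsymbol X}^2 \\ \vdots \\ \bar{\boldsymbol X}^{\ell} \\ \boldsymbol U \end{bmatrix} \in \mathbb{R}^{(\sum_{i=1}^{\ell} n_i + p) \times K}.$$ If $\bar{\boldsymbol D}$ has full rank, then the least-squares problem $$\min_{\hat{\boldsymbol O} \in \mathbb{R}^{n \times (\sum_{i=1}^{\ell} n_i + p)}} \|\bar{\boldsymbol D}^T \hat{\boldsymbol O}^T - \bar{\boldsymbol Y}^T\|_F^2$$ has a unique solution $\hat{\boldsymbol O}^*$, it attains objective value $0$, and $\hat{\boldsymbol O}^* = [\tilde{\boldsymbol A}_1, \tilde{\boldsymbol A}_2, \dots, \tilde{\boldsymbol A}_{\ell}, \tilde{\boldsymbol B}]$.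
   Context: For a vector $\boldsymbol z \in \mathbb{R}^d$ and $i \in \mathbb{N}$, the $i$-th power $\boldsymbol z^i \in \mathbb{R}^{\binom{d+i-1}{i}}$ is the vector obtained from the $i$-fold Kronecker product $\boldsymbol z \otimes \cdots \otimes \boldsymbol z$ by removing duplicate entries arising from commutativity of multiplication, i.e., it lists each degree-$i$ monomial in the entries of $\boldsymbol z$ exactly once (in a fixed ordering); $\boldsymbol z^1 = \boldsymbol z$. Since these monomials are linearly independent functions, each $\tilde{\boldsymbol A}_i$ is well defined and unique. *)

From HB Require Import structures.
From mathcomp Require Import all_boot all_order all_algebra.
Set Implicit Arguments. Unset Strict Implicit. Unset Printing Implicit Defensive.
Import Order.TTheory GRing.Theory Num.Theory.
Local Open Scope ring_scope.

(* Exponent vectors of the degree-i monomials in d variables: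
   m : 'I_d -> 'I_(i+1) with sum of exponents equal to i. *)
Definition mons (d i : nat) : {set {ffun 'I_d -> 'I_i.+1}} :=
  [set m : {ffun 'I_d -> 'I_i.+1} | (\sum_(j < d) (m j : nat) == i)%N].

(* number of degree-i monomials in d variables (= 'C(d+i-1, i)) *)
Definition nmon (d i : nat) : nat := #|mons d i|.

(* i-th power z^i : each degree-i monomial of the entries of z exactly once,
   in the fixed ordering given by enum (mons d i). *)
Definition mpow {R : comRingType} (d i : nat) (z : 'cV[R]_d) : 'cV[R]_(nmon d i) :=
  \col_(k < nmon d i) \prod_(j < d) z j 0 ^+ ((enum_val k : {ffun _ -> _}) j : nat).

(* f(x,u) = sum_{i=1}^l A_i x^i + B u, with A i the operator of degree i.+1 *)
Definition fsys {R : comRingType} (N p l : nat)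
  (A : forall i : 'I_l, 'M[R]_(N, nmon N i.+1)) (B : 'M[R]_(N, p))
  (x : 'cV[R]_N) (u : 'cV[R]_p) : 'cV[R]_N :=
  \sum_(i < l) A i *m mpow i.+1 x + B *m u.

Fixpoint xbar {R : comRingType} (N n p l : nat) (V : 'M[R]_(N, n))
  (A : forall i : 'I_l, 'M[R]_(N, nmon N i.+1)) (B : 'M[R]_(N, p))
  (x0 : 'cV[R]_N) (u : nat -> 'cV[R]_p) (k : nat) : 'cV[R]_n :=
  match k with
  | 0 => V^T *m x0
  | k'.+1 => V^T *m fsys A B (V *m xbar V A B x0 u k') (u k')
  end.

Definition frob2 {R : comRingType} (m q : nat) (M : 'M[R]_(m, q)) : R :=
  \sum_(i < m) \sum_(j < q) M i j ^+ 2.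

(** By the defining identity of the reduced operators, the re-projected states
    follow the intrusive reduced model exactly, so every column of [Ybar] is
    [Ostar] applied to the matching column of the data matrix: [Ybar = Ostar D].
    The residual of [Ostar] is then zero, the minimum of a nonnegative objective;
    any other minimiser [O] also has zero residual, so [O D = Ostar D], and full
    row rank of [D] (which has no more rows than columns) gives [O = Ostar]. *)
From HB Require Import structures.
From mathcomp Require Import all_boot all_order all_algebra.
Import Order.TTheory GRing.Theory Num.Theory.
Local Open Scope ring_scope.

Lemma col_matrixP (R : Type) m n (A B : 'M[R]_(m, n)) :
  (forall j, col j A = col j B) <-> A = B.
Proof.
split=> [eqAB | -> //]; apply/matrixP => i j.
by have /colP/(_ i) := eqAB j; rewrite !mxE.
Qed.

Lemma col_mulmx (R : pzSemiRingType) m n p (A : 'M[R]_(m, n)) (B : 'M[R]_(n, p)) j :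
  col j (A *m B) = A *m col j B.
Proof. by rewrite !colE mulmxA. Qed.

Lemma col_matrix_of_cols (R : Type) m n (c : 'I_n -> 'cV[R]_m) j :
  col j (\matrix_(i, k) c k i 0) = c j.
Proof. by apply/colP => i; rewrite !mxE. Qed.

Section Frobenius.

Variable R : realDomainType.

Lemma frob2_ge0 m n (M : 'M[R]_(m, n)) : 0 <= frob2 M.
Proof. by apply: sumr_ge0 => i _; apply: sumr_ge0 => j _; apply: sqr_ge0. Qed.

Lemma frob2_eq0 m n (M : 'M[R]_(m, n)) : (frob2 M == 0) = (M == 0).
Proof.
apply/eqP/eqP => [M0 | ->]; last first.
  by apply: big1 => i _; apply: big1 => j _; rewrite mxE expr0n.
have row0 i : \sum_(j < n) M i j ^+ 2 = 0.
  by apply: (psumr_eq0P _ M0) => // k _; apply: sumr_ge0 => j _; apply: sqr_ge0.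
apply/matrixP => i j; rewrite mxE; apply/eqP; rewrite -sqrf_eq0; apply/eqP.
by apply: (psumr_eq0P _ (row0 i)) => // k _; apply: sqr_ge0.
Qed.

End Frobenius.

Lemma row_free_lsq_exact (R : realFieldType) m q K
    (D : 'M[R]_(m, K)) (Y : 'M[R]_(q, K)) (O0 : 'M[R]_(q, m)) :
  row_free D -> Y = O0 *m D ->
  let obj := fun O : 'M[R]_(q, m) => frob2 (D^T *m O^T - Y^T) in
  [/\ forall O, obj O0 <= obj O,
      forall O, (forall O', obj O <= obj O') -> O = O0
    & obj O0 = 0].
Proof.
move=> freeD -> obj.
have obj0 : obj O0 = 0 by apply/eqP; rewrite frob2_eq0 trmx_mul subrr.
split=> // [O | O minO]; first by rewrite obj0 frob2_ge0.
have /eqP : obj O = 0 by apply/eqP; rewrite eq_le frob2_ge0 andbT -obj0 minO.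
rewrite frob2_eq0 subr_eq0 -trmx_mul => /eqP/trmx_inj.
exact: row_free_inj.
Qed.

Lemma xbarS_reduced (R : comNzRingType) (N n p l : nat)
    (A : forall i : 'I_l, 'M[R]_(N, nmon N i.+1)) (B : 'M[R]_(N, p))
    (V : 'M[R]_(N, n)) (At : forall i : 'I_l, 'M[R]_(n, nmon n i.+1))
    (x0 : 'cV[R]_N) (u : nat -> 'cV[R]_p) :
  (forall (i : 'I_l) (y : 'cV[R]_n),
      At i *m mpow i.+1 y = V^T *m A i *m mpow i.+1 (V *m y)) ->
  forall k, xbar V A B x0 u k.+1 = fsys At (V^T *m B) (xbar V A B x0 u k) (u k).
Proof.
move=> reducedA k; rewrite /= /fsys mulmxDr mulmx_sumr mulmxA; congr (_ + _).
by apply: eq_bigr => i _; rewrite reducedA -!mulmxA.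
Qed.

Theorem corollary3p2 (R : realFieldType) (N n p l K : nat)
  (A : forall i : 'I_l, 'M[R]_(N, nmon N i.+1)) (B : 'M[R]_(N, p))
  (V : 'M[R]_(N, n))
  (At : forall i : 'I_l, 'M[R]_(n, nmon n i.+1))
  (x0 : 'cV[R]_N) (u : nat -> 'cV[R]_p) :
  (n <= N)%N ->
  V^T *m V = 1%:M ->
  (forall (i : 'I_l) (y : 'cV[R]_n),
      At i *m mpow i.+1 y = V^T *m A i *m mpow i.+1 (V *m y)) ->
  (exists y : 'cV[R]_n, x0 = V *m y) ->
  (p + \sum_(i < l) nmon n i.+1 <= K)%N ->
  let xb := xbar V A B x0 u in
  let Xi := fun i : 'I_l =>
    \matrix_(r < nmon n i.+1, k < K) (mpow i.+1 (xb k)) r 0 in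
  let U := \matrix_(r < p, k < K) u k r 0 in
  let Ybar := \matrix_(r < n, k < K) xb k.+1 r 0 in
  let D : 'M[R]_(\sum_(i < l) nmon n i.+1 + p, K) := col_mx (mxcol Xi) U in
  let obj := fun O : 'M[R]_(n, \sum_(i < l) nmon n i.+1 + p) =>
    frob2 (D^T *m O^T - Ybar^T) in
  let Ostar : 'M[R]_(n, \sum_(i < l) nmon n i.+1 + p) :=
    row_mx (mxrow At) (V^T *m B) in
  \rank D = minn (\sum_(i < l) nmon n i.+1 + p) K ->
  [/\ forall O, obj Ostar <= obj O,
      forall O, (forall O', obj O <= obj O') -> O = Ostar
    & obj Ostar = 0].
Proof.
move=> _ _ reducedA _ sizeK xb Xi U Ybar D obj Ostar rankD.
have freeD : row_free D.
  by rewrite /row_free rankD; apply/eqP/minn_idPl; rewrite addnC.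
apply: row_free_lsq_exact freeD _.
apply/col_matrixP => k.
rewrite col_mulmx col_col_mx col_mxcol mul_row_col mul_mxrow_mxcol.
rewrite !col_matrix_of_cols.
under eq_bigr => i _ do rewrite col_matrix_of_cols.
exact: xbarS_reduced.
Qed.
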